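(* Fix $\varepsilon>0$ and a request sequence. If c-REShare$(\varepsilon)$ places the jobs of request $r$ in a node at layer $\ell^*(r)$, then both OPT and SHA$(\varepsilon)$ place every job $(r,v)$, $v\in\mathcal V_r$, in some node at some layer $\ell'\le\ell^*(r)$.
   Context: Network: an undirected layered graph whose vertices (nodes) are datacenters. A node is at layer $\ell\ge 0$ if its distance in links from the closest leaf is $\ell$ (leaves are at layer $0$). Every node can host arbitrarily many virtual machines (VMs). Each VM $b$ runs exactly one VNF $v$ from a finite set $\mathcal V$, has maximum computing capability $\bar\mu>0$ and an allocated capability $\mu_b\le\bar\mu$. Each VNF $v$ has computing complexity $\theta_v\in(0,1]$. Requests: requests $r$ arrive online; each has a set $\mathcal V_r\subseteq\mathcal V$ of VNFs, arrival time $a_r$, duration $\tau_r$, traffic load $\lambda_r\ge\lambda_{\min}$ where $\lambda_{\min}=\inf_r\lambda_r>0$ is known in advance, end-to-end delay target $D_r$, and an arrival leaf. For $v\in\mathcal V_r$, $(r,v)$ is a job; jobs of $r$ exist during $[a_r,a_r+\tau_r)$. For a VM $b$ running $v$, $\Lambda(b)$ is the total load of jobs on $b$, and each job on $b$ experiences processing latency $1/(\mu_b-\theta_v\Lambda(b))$. Forwarding latency from a leaf to layer $\ell$ is $d_\ell$, with $d_{\ell+1}>d_\ell$. The latency of $r$ is the maximum of $d_\ell$ over layers hosting its jobs plus the sum of processing latencies of its jobs. Fair delay allocation: $M_{r,v}=1/(\bar\mu-\theta_v\lambda_r)$; $\ell^*(r)$ is the highest layer $\ell$ with $d_\ell+\sum_{v\in\mathcal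 V_r}M_{r,v}\le D_r$; $D_r^v=\frac{M_{r,v}}{\sum_{u\in\mathcal V_r}M_{r,u}}(D_r-d_{\ell^*(r)})$. A deployment of $r$ is feasible if each job $(r,v)$ is on a VM $b$ running $v$ with $\mu_b\le\bar\mu$ and $1/(\mu_b-\theta_v\Lambda(b))\le D_r^v$, and the latency of $r$ is at most $D_r$. Cost: a VM $b$ at a node of layer $\ell$ that hosts at least one job costs $\kappa_f^\ell+\kappa_p^\ell\mu_b$, with $\kappa_f^{\ell+1}<\kappa_f^\ell$ and $\kappa_p^{\ell+1}<\kappa_p^\ell$. OPT denotes a minimum-cost feasible deployment of all requests computed with full knowledge of the request sequence. Latency ranges: for $\varepsilon>0$, $L_0=[\frac{1}{\bar\mu-\lambda_{\min}},\frac{1}{\bar\mu-\lambda_{\min}(1+\varepsilon)}]$, $L_j=(\frac{1}{\bar\mu-\lambda_{\min}(1+\varepsilon)^j},\frac{1}{\bar\mu-\lambda_{\min}(1+\varepsilon)^{j+1}}]$ for $j\ge1$ (indices with $\lambda_{\min}(1+\varepsilon)^{j+1}<\bar\mu$); job $(r,v)$ is associated with $L_j$ if $D_r^v\in L_j$. Algorithm c-REShare$(\varepsilon)$: on arrival of $r$, pick a node $i^*$ at layer $\ell^*(r)$; for each $v\in\mathcal V_r$ with $D_r^v\in L_j$, place $(r,v)$ (best fit: largest $\Lambda(b)$) on a VM in $i^*$ running $v$ that hosts only jobs associated with $L_j$ and for which running at speed $\bar\mu$ with the added load keeps every job's processing latency within its fair delay allocation, opening a new VM if none exists; VM capabilities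 are set to $\theta_v\Lambda(b)+1/\min_{(r',v)\in b}D^v_{r'}$. On departure, jobs are removed and capabilities reset by the same formula. Shadow strategy SHA$(\varepsilon)$: each job $(r,v)$ associated with $L_j$ is replaced by a top job with the same load and relaxed delay constraint $D_j=\frac{1}{\bar\mu-\lambda_{\min}(1+\varepsilon)^{j+1}}\ge D_r^v$. SHA$(\varepsilon)$ is the minimum-cost placement of the current top jobs such that: each job of $r$ is placed in a single node at a layer at which the deployment of $r$ is feasible; within that node, the job's load may be split fractionally among several VMs running $v$; jobs associated with different ranges never share a VM; each top job's processing latency is at most its relaxed constraint. Upon departures it is recomputed on the remaining requests. *)

From HB Require Import structures.
From mathcomp Require Import all_boot all_order all_algebra.
Set Implicit Arguments. Unset Strict Implicit. Unset Printing Implicit Defensive.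
Import Order.TTheory GRing.Theory Num.Theory.
Local Open Scope ring_scope.

Record inst (R : realFieldType) := Inst {
  node : finType;
  vnf : finType;
  req : finType;
  layer : node -> nat;
  mubar : R;                      (* maximum VM computing capability *)
  theta : vnf -> R;               (* computing complexity of a VNF *)
  d : nat -> R;                   (* forwarding latency leaf -> layer l *)
  kf : nat -> R;                  (* fixed cost per layer *)
  kp : nat -> R;                  (* proportional cost per layer *)
  VR : req -> {set vnf};
  arr : req -> R;
  dur : req -> R;
  lam : req -> R;                 (* traffic load lambda_r *)
  Dt : req -> R;                  (* end-to-end delay target D_r *)
  leaf : req -> node;
  lmin : R
}.
Arguments node {R} _.
Arguments vnf {R} _.
Arguments req {R} _.
Arguments layer {R} _.
Arguments mubar {R} _.
Arguments theta {R} _.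
Arguments d {R} _.
Arguments kf {R} _.
Arguments kp {R} _.
Arguments VR {R} _.
Arguments arr {R} _.
Arguments dur {R} _.
Arguments lam {R} _.
Arguments Dt {R} _.
Arguments leaf {R} _.
Arguments lmin {R} _.

Section Defs.
Variable R : realFieldType.
Variable X : inst R.

Definition wf : Prop :=
  [/\ 0 < mubar X,
      (forall v, 0 < theta X v /\ theta X v <= 1),
      (0 < lmin X /\ (forall r, lmin X <= lam X r) /\ (exists r, lam X r = lmin X))
        (* lambda_min = inf_r lambda_r (a min, the sequence being finite) *),
      (forall l, d X l < d X l.+1)
    & (forall l, kf X l.+1 < kf X l /\ kp X l.+1 < kp X l) /\ (forall r, layer X (leaf X r) = 0%N)].

Definition active (t : R) : pred (req X) :=
  fun r => (arr X r <= t) && (t < arr X r + dur X r).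

Definition M (r : req X) (v : vnf X) : R := (mubar X - theta X v * lam X r)^-1.
Definition SM (r : req X) : R := \sum_(v in VR X r) M r v.
Definition lstar (r : req X) : nat :=
  \max_(i : node X | d X (layer X i) + SM r <= Dt X r) layer X i.
Definition Drv (r : req X) (v : vnf X) : R :=
  M r v / SM r * (Dt X r - d X (lstar r)).

(* ---------- integral deployments (snapshot) ----------
   VM b = (i, v, k): the k-th VM running VNF v in node i. *)
Record deployment := Deployment {
  dnode : req X -> vnf X -> node X;
  dvm   : req X -> vnf X -> nat;
  dcap  : node X -> vnf X -> nat -> R
}.

Definition load (S : pred (req X)) (D : deployment) (i : node X) (v : vnf X)
    (k : nat) : R :=
  \sum_(r | S r && (v \in VR X r) && (dnode D r v == i) && (dvm D r v == k)) lam X r.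

Definition proc (S : pred (req X)) (D : deployment) (r : req X) (v : vnf X) : R :=
  (dcap D (dnode D r v) v (dvm D r v)
     - theta X v * load S D (dnode D r v) v (dvm D r v))^-1.

Definition latency (S : pred (req X)) (D : deployment) (r : req X) : R :=
  \big[Num.max/d X 0%N]_(v in VR X r) d X (layer X (dnode D r v))
  + \sum_(v in VR X r) proc S D r v.

Definition req_feasible (S : pred (req X)) (D : deployment) (r : req X) : Prop :=
  (forall v, v \in VR X r ->
     let i := dnode D r v in let k := dvm D r v in
     [/\ dcap D i v k <= mubar X,
         theta X v * load S D i v k < dcap D i v k   (* stable queue *)
       & proc S D r v <= Drv r v])
  /\ latency S D r <= Dt X r.

Definition feasible (S : pred (req X)) (D : deployment) : Prop :=
  forall r, S r -> req_feasible S D r.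

Definition hosted (S : pred (req X)) (D : deployment) : seq (node X * vnf X * nat) :=
  undup [seq (dnode D p.1 p.2, p.2, dvm D p.1 p.2)
        | p <- enum [pred p : req X * vnf X | S p.1 && (p.2 \in VR X p.1)]].
Definition cost (S : pred (req X)) (D : deployment) : R :=
  \sum_(b <- hosted S D) (kf X (layer X b.1.1) + kp X (layer X b.1.1) * dcap D b.1.1 b.1.2 b.2).

Definition feasible_layer (r : req X) (l : nat) : Prop :=
  exists (D : deployment) (i : node X),
    layer X i = l /\ (forall v, v \in VR X r -> dnode D r v = i)
    /\ req_feasible (pred1 r) D r.

Definition valid_range (eps : R) (j : nat) : bool :=
  lmin X * (1 + eps) ^+ j.+1 < mubar X.
Definition in_range (eps : R) (j : nat) (x : R) : bool :=
  if j == 0%N then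
    ((mubar X - lmin X)^-1 <= x) && (x <= (mubar X - lmin X * (1 + eps))^-1)
  else
    ((mubar X - lmin X * (1 + eps) ^+ j)^-1 < x)
    && (x <= (mubar X - lmin X * (1 + eps) ^+ j.+1)^-1).
Definition associated (eps : R) (r : req X) (v : vnf X) (j : nat) : bool :=
  valid_range eps j && in_range eps j (Drv r v).
Definition Dj (eps : R) (j : nat) : R := (mubar X - lmin X * (1 + eps) ^+ j.+1)^-1.

(* ---------- shadow placements (fractional within a node) ----------
   at most sK VMs per (node, VNF); VM b = (i, v, k) with k : 'I_sK *)
Record sha_place := ShaPlace {
  sK : nat;
  snode : req X -> vnf X -> node X;
  sfrac : req X -> vnf X -> 'I_sK -> R;
  scap : node X -> vnf X -> 'I_sK -> R;
  sj : req X -> vnf X -> nat                 (* range index of job (r,v) *)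
}.
Arguments sfrac : clear implicits.
Arguments scap : clear implicits.

Definition sload (S : pred (req X)) (P : sha_place) (i : node X) (v : vnf X)
    (k : 'I_(sK P)) : R :=
  \sum_(r | S r && (v \in VR X r) && (snode P r v == i)) sfrac P r v k * lam X r.

Arguments sload : clear implicits.
Definition shosts (S : pred (req X)) (P : sha_place) (i : node X) (v : vnf X)
    (k : 'I_(sK P)) : bool :=
  [exists r, S r && (v \in VR X r) && (snode P r v == i) && (0 < sfrac P r v k)].

Arguments shosts : clear implicits.
Definition sha_admissible (eps : R) (S : pred (req X)) (P : sha_place) : Prop :=
  forall r, S r -> forall v, v \in VR X r ->
  [/\ associated eps r v (sj P r v),
      feasible_layer r (layer X (snode P r v)),
      ((forall k, 0 <= sfrac P r v k) /\ \sum_k sfrac P r v k = 1),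
      (forall k, 0 < sfrac P r v k ->
         let i := snode P r v in
         [/\ scap P i v k <= mubar X,
             theta X v * sload S P i v k < scap P i v k
           & (scap P i v k - theta X v * sload S P i v k)^-1 <= Dj eps (sj P r v)])
    & (forall r' k, S r' -> v \in VR X r' -> snode P r' v = snode P r v ->
         0 < sfrac P r v k -> 0 < sfrac P r' v k -> sj P r' v = sj P r v)].

Definition sha_cost (S : pred (req X)) (P : sha_place) : R :=
  \sum_(i : node X) \sum_(v : vnf X) \sum_(k : 'I_(sK P) | shosts S P i v k)
     (kf X (layer X i) + kp X (layer X i) * scap P i v k).

Definition is_SHA (eps t : R) (P : sha_place) : Prop :=
  sha_admissible eps (active t) P /\
  forall P' : sha_place, sha_admissible eps (active t) P' ->
    sha_cost (active t) P <= sha_cost (active t) P'.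

Definition is_OPT (t : R) (D : deployment) : Prop :=
  feasible (active t) D /\
  forall D' : deployment, feasible (active t) D' -> cost (active t) D <= cost (active t) D'.

End Defs.

From HB Require Import structures.
From mathcomp Require Import all_boot all_order all_algebra.
Import Order.TTheory GRing.Theory Num.Theory.
Local Open Scope ring_scope.

(* A job (r,v) shares its VM only with further nonnegative loads and runs at
   capability at most mubar, so its processing latency is at least
   M r v = 1/(mubar - theta_v lambda_r).  Hence any feasible deployment of r
   that uses a node of layer l satisfies d_l + sum_v M r v <= D_r, and l*(r) is
   by definition the largest layer of a node with this property.  This applies
   to OPT directly, and to SHA through the single-node deployment witnessing
   that the layer it uses is feasible for r.  Neither eps > 0 nor the
   placement made by c-REShare enters the argument. *)

Section FeasibleLayerBound.
Context {R : realFieldType} {X : inst R}.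
Hypothesis lam_ge0 : forall r : req X, 0 <= lam X r.
Hypothesis theta_ge0 : forall v : vnf X, 0 <= theta X v.

Lemma lam_le_load (S : pred (req X)) (D : deployment X) (r : req X) (v : vnf X) :
  S r -> v \in VR X r -> lam X r <= load S D (dnode D r v) v (dvm D r v).
Proof.
move=> Sr vr; rewrite /load (bigD1 r) /=; last by rewrite Sr vr !eqxx.
by rewrite lerDl sumr_ge0.
Qed.

Lemma M_le_proc (S : pred (req X)) (D : deployment X) (r : req X) (v : vnf X) :
  S r -> v \in VR X r ->
  let i := dnode D r v in let k := dvm D r v in
  dcap D i v k <= mubar X -> theta X v * load S D i v k < dcap D i v k ->
  M r v <= proc S D r v.
Proof.
move=> Sr vr /= cap_le stable; rewrite /M /proc.
set slack := (s in _ <= s^-1).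
have slack_gt0 : 0 < slack by rewrite subr_gt0.
have slack_le : slack <= mubar X - theta X v * lam X r.
  by rewrite lerB // ler_wpM2l // lam_le_load.
by rewrite lef_pV2 ?posrE // (lt_le_trans slack_gt0).
Qed.

Lemma req_feasible_layer_budget (S : pred (req X)) (D : deployment X)
    (r : req X) (v : vnf X) :
  S r -> req_feasible S D r -> v \in VR X r ->
  d X (layer X (dnode D r v)) + SM r <= Dt X r.
Proof.
move=> Sr [jobs_ok latency_ok] vr; apply: le_trans latency_ok; apply: lerD.
  exact: le_bigmax_cond.
apply: ler_sum => w wr; have [cap_le stable _] := jobs_ok w wr.
exact: M_le_proc.
Qed.

End FeasibleLayerBound.

Lemma layer_le_lstar {R : realFieldType} {X : inst R} (r : req X) (i : node X) :
  d X (layer X i) + SM r <= Dt X r -> (layer X i <= lstar r)%N.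
Proof. exact: (leq_bigmax_cond (F := layer X)). Qed.

Lemma wf_lam_ge0 {R : realFieldType} {X : inst R} :
  wf X -> forall r : req X, 0 <= lam X r.
Proof. by case=> _ _ [lmin_gt0 [lmin_le _]] _ _ r; rewrite (le_trans (ltW lmin_gt0)). Qed.

Lemma wf_theta_ge0 {R : realFieldType} {X : inst R} :
  wf X -> forall v : vnf X, 0 <= theta X v.
Proof. by case=> _ theta_bounds _ _ _ v; have [/ltW] := theta_bounds v. Qed.

Theorem lemma2 (R : realFieldType) (X : inst R) (eps : R) (t : R) (r : req X) :
  wf X -> 0 < eps -> active t r ->
  (* c-REShare(eps) places the jobs of r in a node i* at layer l*(r) *)
  (exists i : node X, layer X i = lstar r /\ d X (lstar r) + SM r <= Dt X r) ->
  (forall D : deployment X, is_OPT t D ->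
     forall v, v \in VR X r -> (layer X (dnode D r v) <= lstar r)%N) /\
  (forall P : sha_place X, is_SHA eps t P ->
     forall v, v \in VR X r -> (layer X (snode P r v) <= lstar r)%N).
Proof.
move=> wfX _ r_active _.
have budget := req_feasible_layer_budget (wf_lam_ge0 wfX) (wf_theta_ge0 wfX).
split.
  move=> D [D_feasible _] v vr; apply: layer_le_lstar.
  exact: budget r_active (D_feasible r r_active) vr.
move=> P [P_admissible _] v vr.
have [_ [D [i [<- [D_in_i D_feasible]]]] _ _ _] := P_admissible r r_active v vr.
apply: layer_le_lstar; rewrite -(D_in_i v vr).
exact: budget (pred1 r) D r v (eqxx r) D_feasible vr.
Qed.
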